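(* Let $F=(f_1,\dots,f_s)\subset\mathbb K[X]$ generate a zero-dimensional ideal $J$ with $d=\dim_{\mathbb K}\mathbb K[X]/J$, let $\mathcal B=\{b_1,\dots,b_d\}$ be any set of monomials whose classes form a basis of $\mathbb K[X]/J$ (not necessarily a standard basis), and let $a\neq1$ be a monomial. Let $T_a\in\mathbb K^{d\times d}$ be the matrix of multiplication by $a$ on $\mathbb K[X]/J$ in the basis $\mathcal B$, i.e. $[a b_i]=\sum_j t_{ij}[b_j]$, and put $V=a\,\mathbf b-T_a\mathbf b$, where $\mathbf b=(b_1,\dots,b_d)^\top$. Suppose $H\in\mathbb K[X]^{d\times s}$ satisfies $V=H\,(f_1,\dots,f_s)^\top$. For $k=1,\dots,s$ let $A_k$ be the set of monomials occurring in at least one entry of the $k$-th column of $H$, and $A=(A_1,\dots,A_s)$. Then the Macaulay matrix $M(A\cdot F)$ is an elimination template for $F$ with respect to $a$ (and $\mathcal B$).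
   Context: $[X]$ denotes the set of monomials in $X=\{x_1,\dots,x_k\}$. For a finite tuple of polynomials $P=(p_1,\dots,p_t)$, $[X]_P$ is the set of all monomials appearing in the $p_i$; if $[X]_P=\{m_1,\dots,m_n\}$, the Macaulay matrix $M(P)\in\mathbb K^{t\times n}$ has $(i,j)$ entry equal to the coefficient of $m_j$ in $p_i$. For $A=(A_1,\dots,A_s)$ with $A_j\subset[X]$ finite, the set of shifts is $A\cdot F=\{m f_j: m\in A_j,\ 1\le j\le s\}$. Given a monomial basis $\mathcal B$ of $\mathbb K[X]/\langle F\rangle$ (a set of monomials whose classes form a basis) and an action monomial $a$, set $\mathcal R=\{ab: b\in\mathcal B\}\setminus\mathcal B$ (reducible monomials), $\overline{\mathcal B}=\mathcal B\cap[X]_{A\cdot F}$ (basic monomials present), and $\mathcal E=[X]_{A\cdot F}\setminus(\mathcal R\cup\mathcal B)$ (excessive monomials). The Macaulay matrix $M(A\cdot F)$ with columns arranged in blocks $[\,M_{\mathcal E}\ M_{\mathcal R}\ M_{\overline{\mathcal B}}\,]$ is called an elimination template for $F$ with respect to $a$ if (1) $\mathcal R\subset[X]_{A\cdot F}$, and (2) its reduced row echelon form is $$\begin{bmatrix} * & 0 & * \\ 0 & I & \widetilde M_{\overline{\mathcal B}} \\ 0 & 0 & 0\end{bmatrix},$$ where $*$ denotes arbitrary submatrices, $0$ zero matrices of suitable sizes, $I$ the identity matrix of order $\#\mathcal R$, and $\widetilde M_{\overline{\mathcal B}}$ is a $\#\mathcal R\times\#\overline{\mathcal B}$ matrix (column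 blocks correspond to $\mathcal E$, $\mathcal R$, $\overline{\mathcal B}$). *)

From HB Require Import structures.
From mathcomp Require Import all_boot all_order all_algebra.
From mathcomp Require Import mpoly.
Set Implicit Arguments. Unset Strict Implicit. Unset Printing Implicit Defensive.
Import Order.TTheory GRing.Theory.
Local Open Scope ring_scope.

Section Defs.
Variables (K : fieldType) (n s d : nat).
Notation poly := {mpoly K[n]}.
Notation mon := 'X_{1..n}.

Definition in_ideal (F : 'I_s -> poly) (p : poly) : Prop :=
  exists h : 'I_s -> poly, p = \sum_(k < s) h k * F k.

Definition quotient_basis (F : 'I_s -> poly) (B : 'I_d -> mon) : Prop :=
  (forall p : poly, exists c : 'I_d -> K,
      in_ideal F (p - \sum_(i < d) c i *: 'X_[B i])) /\
  (forall c : 'I_d -> K,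
      in_ideal F (\sum_(i < d) c i *: 'X_[B i]) -> forall i, c i = 0).

Definition col_monomials (H : 'I_d -> 'I_s -> poly) (k : 'I_s) : seq mon :=
  undup (flatten [seq msupp (H i k) | i <- enum 'I_d]).

Definition shifts (F : 'I_s -> poly) (A : 'I_s -> seq mon) : seq poly :=
  undup (flatten [seq [seq 'X_[m] * F k | m <- A k] | k <- enum 'I_s]).

Definition monomials_of (P : seq poly) : seq mon :=
  undup (flatten [seq msupp p | p <- P]).

Definition basis_seq (B : 'I_d -> mon) : seq mon := [seq B i | i <- enum 'I_d].

Definition reducible (B : 'I_d -> mon) (a : mon) : seq mon :=
  undup [seq m <- [seq mnm_add a b | b <- basis_seq B] | m \notin basis_seq B].

Definition basic_present (P : seq poly) (B : 'I_d -> mon) : seq mon :=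
  [seq b <- basis_seq B | b \in monomials_of P].

Definition excessive (P : seq poly) (B : 'I_d -> mon) (a : mon) : seq mon :=
  [seq m <- monomials_of P | (m \notin reducible B a) && (m \notin basis_seq B)].

Definition columns (P : seq poly) (B : 'I_d -> mon) (a : mon) : seq mon :=
  excessive P B a ++ [seq m <- reducible B a | m \in monomials_of P]
                  ++ basic_present P B.

Definition macaulay (P : seq poly) (cols : seq mon) : 'M[K]_(size P, size cols) :=
  \matrix_(i < size P, j < size cols) (nth 0 P i)@_(nth 0%MM cols j).

End Defs.

Section RREF.
Variables (K : fieldType) (m p : nat).

Definition is_pivot (R : 'M[K]_(m, p)) (i : 'I_m) (j : 'I_p) : Prop :=
  R i j != 0 /\ (forall j' : 'I_p, (j' < j)%N -> R i j' = 0).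

Definition is_rref (R : 'M[K]_(m, p)) : Prop :=
  (forall i1 i2 : 'I_m, (i1 <= i2)%N -> (forall j, R i1 j = 0) -> forall j, R i2 j = 0) /\
  (forall i j, is_pivot R i j -> R i j = 1 /\ forall i', i' != i -> R i' j = 0) /\
  (forall (i1 i2 : 'I_m) (j1 j2 : 'I_p), (i1 < i2)%N -> is_pivot R i1 j1 -> is_pivot R i2 j2 -> (j1 < j2)%N).

Definition rref_of (R M : 'M[K]_(m, p)) : Prop :=
  is_rref R /\ exists P : 'M[K]_m, P \in unitmx /\ R = P *m M.

(* block shape [[*, 0, *], [0, I, *], [0, 0, 0]] with column blocks of widths
   e, r, p - e - r, and the identity block of order r *)
Definition template_shape (e r : nat) (R : 'M[K]_(m, p)) : Prop :=
  exists p1 : nat, (p1 + r <= m)%N /\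
  forall (i : 'I_m) (j : 'I_p),
    ((i < p1)%N -> (e <= j < e + r)%N -> R i j = 0) /\
    ((p1 <= i < p1 + r)%N -> (j < e + r)%N ->
        R i j = ((e <= j)%N && (j - e == i - p1)%N)%:R) /\
    ((p1 + r <= i)%N -> R i j = 0).

End RREF.

Definition elimination_template (K : fieldType) (n s d : nat)
    (F : 'I_s -> {mpoly K[n]}) (A : 'I_s -> seq 'X_{1..n})
    (B : 'I_d -> 'X_{1..n}) (a : 'X_{1..n}) : Prop :=
  let P := shifts F A in
  let M := macaulay P (columns P B a) in
  {subset reducible B a <= monomials_of P} /\
  exists R, rref_of R M /\
    template_shape (size (excessive P B a)) (size (reducible B a)) R.

From HB Require Import structures.
From mathcomp Require Import all_boot all_order all_algebra.
From mathcomp Require Import mpoly.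
From mathcomp Require Import perm zify ring.
Set Implicit Arguments. Unset Strict Implicit. Unset Printing Implicit Defensive.
Import GRing.Theory.
Local Open Scope ring_scope.

(* Every V_i = a b_i - sum_j t_ij b_j equals sum_k H_ik f_k, so it is a linear
   combination of the shifts A.F, i.e. of the rows of M = M(A.F).  Its only
   monomial outside B is the reducible monomial a b_i, with coefficient 1; hence
   every reducible monomial is a column of M, and the row space of M contains, for
   each reducible column, a vector vanishing on the excessive columns and equal to
   1 on that column and 0 on the other reducible ones.  Conversely a combination of
   the rows vanishing on all excessive and reducible columns is a polynomial of J
   supported on B, hence zero because B is a basis modulo J.  These two properties
   of the row space force the reduced row echelon form of M to have the template
   shape: the reducible columns are exactly the pivot columns following those among
   the excessive ones. *)

(** * Reduced row echelon form *)
Section PivotColumn.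
Variables (K : fieldType) (m : nat).
Implicit Types v w : 'cV[K]_m.

Lemma pivot_unitmx_at (kk : 'I_m) v : v kk 0 != 0 ->
  exists2 Q : 'M[K]_m, Q \in unitmx &
    Q *m v = delta_mx kk 0 /\
    forall w, w kk 0 = 0 -> Q *m w = w.
Proof.
move=> nz.
set c := v kk 0; set y := v - delta_mx kk 0; set N := y *m delta_mx 0 kk.
have Nw w : N *m w = (w kk 0) *: y.
  rewrite -mulmxA -rowE -mul_mx_scalar; congr (_ *m _).
  by apply/rowP => j; rewrite ord1 !mxE eqxx.
have NN : N *m N = (c - 1) *: N.
  rewrite {1}/N mulmxA Nw -scalemxAl; congr (_ *: _).
  by rewrite !mxE eqxx.
(* [1 + N] is the identity with column [kk] replaced by [v]; [Q] is its inverse. *)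
set Q := 1%:M - c^-1 *: N.
have QG : Q *m (1%:M + N) = 1%:M.
  rewrite mulmxDr mulmx1 /Q mulmxBl mul1mx -scalemxAl NN scalerA.
  have -> : c^-1 * (c - 1) = 1 - c^-1 by field.
  by rewrite scalerBl scale1r opprB [N + _]addrC !subrK.
have [uQ uG] := mulmx1_unit QG.
have Gv : (1%:M + N) *m delta_mx kk 0 = v.
  by rewrite mulmxDl mul1mx Nw mxE eqxx eqxx scale1r /y addrC subrK.
have Gw w : w kk 0 = 0 -> (1%:M + N) *m w = w.
  by move=> w0; rewrite mulmxDl mul1mx Nw w0 scale0r addr0.
exists Q => //; split; first by rewrite -Gv mulmxA QG mul1mx.
by move=> w w0; rewrite -{1}(Gw w w0) mulmxA QG mul1mx.
Qed.

Lemma pivot_unitmx (kk i0 : 'I_m) v : (kk <= i0)%N -> v i0 0 != 0 ->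
  exists2 Q : 'M[K]_m, Q \in unitmx &
    Q *m v = delta_mx kk 0 /\
    forall w, (forall i : 'I_m, (kk <= i)%N -> w i 0 = 0) -> Q *m w = w.
Proof.
move=> le_kk_i0 nz; set S : 'M[K]_m := tperm_mx i0 kk.
have Sv : (S *m v) kk 0 != 0 by rewrite -xrowE mxE tpermR.
have [Q uQ [Qv Qw]] := pivot_unitmx_at Sv.
exists (Q *m S); first by rewrite unitmx_mul uQ unitmxE det_perm unitrX ?unitrN ?unitr1.
split; first by rewrite -mulmxA.
move=> w w0; have Sw : S *m w = w.
  by apply/colP => i; rewrite -xrowE mxE; case: tpermP => [->|->|//]; rewrite !w0.
by rewrite -mulmxA Sw Qw ?w0.
Qed.

End PivotColumn.

Section PivotForm.
Variables (K : fieldType) (m p : nat).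
Implicit Types (R M : 'M[K]_(m, p)) (c k : nat) (piv : nat -> nat).

(* The first [c] columns of [R] are in reduced row echelon form, the pivot of
   row [i < k] sitting in column [piv i]. *)
Record pivot_form R c k piv : Prop := PivotForm {
  pivot_rows : (k <= m)%N;
  pivot_below : forall (i : 'I_m) (j : 'I_p), (k <= i)%N -> (j < c)%N -> R i j = 0;
  pivot_lt : forall i, (i < k)%N -> (piv i < c)%N;
  pivot_before : forall (i : 'I_m) (j : 'I_p), (i < k)%N -> (j < piv i)%N -> R i j = 0;
  pivot_one : forall (i : 'I_m) (j : 'I_p), (i < k)%N -> j = piv i :> nat -> R i j = 1;
  pivot_col : forall (i i' : 'I_m) (j : 'I_p),
    (i < k)%N -> j = piv i :> nat -> i' != i -> R i' j = 0;
  pivot_incr : forall i i', (i < i')%N -> (i' < k)%N -> (piv i < piv i')%N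
}.

Lemma pivot_form_zero_col R c k piv (jc : 'I_p) : jc = c :> nat ->
  pivot_form R c k piv -> (forall i : 'I_m, (k <= i)%N -> R i jc = 0) ->
  pivot_form R c.+1 k piv.
Proof.
move=> jc_c [km below lt before one col incr] zero_jc.
split => // [i j le_k_i|i /lt/ltnW //].
rewrite ltnS leq_eqVlt => /orP [/eqP j_c|]; last exact: below.
have -> : j = jc by apply: val_inj => /=; rewrite jc_c.
exact: zero_jc.
Qed.

Lemma pivot_form_new_pivot R R' c k piv (jc : 'I_p) (kk : 'I_m) :
  jc = c :> nat -> kk = k :> nat -> pivot_form R c k piv ->
  (forall i (j : 'I_p), (j < c)%N -> R' i j = R i j) ->
  (forall i, R' i jc = (i == kk)%:R) ->
  pivot_form R' c.+1 k.+1 (fun i => if i == k then c else piv i).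
Proof.
move=> jc_c kk_k [km below lt before one col incr] R'_old R'_new.
have lt_prev i : i != k -> (i < k.+1)%N -> (i < k)%N.
  by move=> ne; rewrite ltnS leq_eqVlt (negPf ne).
have eq_jc (j : 'I_p) : j = c :> nat -> j = jc.
  by move=> j_c; apply: val_inj => /=; rewrite j_c jc_c.
split.
- by rewrite -kk_k ltn_ord.
- move=> i j lt_k_i; rewrite ltnS leq_eqVlt => /orP [/eqP/eq_jc ->|ltjc].
    by rewrite R'_new; case: eqP => // i_kk; rewrite i_kk kk_k ltnn in lt_k_i.
  by rewrite R'_old // below // ltnW.
- by move=> i; case: eqP => [//|/eqP ne /(lt_prev _ ne)/lt/ltnW].
- move=> i j; case: eqP => [i_k _ ltjc|/eqP ne /(lt_prev _ ne) lt_i_k ltj].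
    by rewrite R'_old // below // i_k.
  by rewrite R'_old ?before // (ltn_trans ltj (lt _ lt_i_k)).
- move=> i j; case: eqP => [i_k _ /eq_jc ->|/eqP ne /(lt_prev _ ne) lt_i_k j_piv].
    by rewrite R'_new; have -> : i == kk by apply/eqP/val_inj; rewrite /= i_k.
  by rewrite R'_old ?one // j_piv lt.
- move=> i i' j; case: eqP => [i_k _ /eq_jc -> ne|/eqP ne /(lt_prev _ ne) lt_i_k j_piv ne'].
    rewrite R'_new; case: eqP => // i'_kk; case/eqP: ne.
    by apply: val_inj; rewrite i'_kk /= i_k.
  by rewrite R'_old ?(col i) // j_piv lt.
- move=> i i' lt_ii'; rewrite ltnS leq_eqVlt => /orP [/eqP i'_k|lt_i'_k].
    by rewrite i'_k eqxx (ltn_eqF (leq_trans lt_ii' _)) ?lt -?i'_k.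
  by rewrite (ltn_eqF lt_i'_k) (ltn_eqF (ltn_trans lt_ii' lt_i'_k)) incr.
Qed.

Lemma pivot_formS R c k piv : (c < p)%N -> pivot_form R c k piv ->
  exists Q : 'M[K]_m, exists k', exists piv',
    Q \in unitmx /\ pivot_form (Q *m R) c.+1 k' piv'.
Proof.
move=> ltcp PF; set jc := Ordinal ltcp.
have [/existsP [i0 /andP [le_k_i0 nz]] | no_pivot] :=
  boolP [exists i : 'I_m, (k <= i)%N && (R i jc != 0)]; last first.
  exists 1%:M, k, piv; rewrite unitmx1 mul1mx; split => //.
  apply: (pivot_form_zero_col (jc := jc) erefl PF) => i le_k_i; apply/eqP.
  by apply: contraNT no_pivot => nz; apply/existsP; exists i; rewrite le_k_i.
have ltkm : (k < m)%N by apply: leq_trans (ltn_ord i0).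
have nz_col : col jc R i0 0 != 0 by rewrite mxE.
have [Q uQ [Qv Qw]] := @pivot_unitmx K m (Ordinal ltkm) i0 _ le_k_i0 nz_col.
have QR_col i j : (Q *m R) i j = (Q *m col j R) i 0.
  by rewrite colE mulmxA -colE [RHS]mxE.
exists Q, k.+1, (fun i => if i == k then c else piv i); split => //.
apply: (pivot_form_new_pivot (jc := jc) (kk := Ordinal ltkm) erefl erefl PF) => [i j ltjc|i].
  rewrite QR_col Qw ?mxE // => i' le_k_i'.
  by rewrite mxE (pivot_below PF).
by rewrite QR_col Qv mxE andbT.
Qed.

Lemma pivot_form_exists M :
  exists Q : 'M[K]_m, exists k, exists piv, Q \in unitmx /\ pivot_form (Q *m M) p k piv.
Proof.
suff: forall c, (c <= p)%N ->
    exists Q : 'M[K]_m, exists k, exists piv, Q \in unitmx /\ pivot_form (Q *m M) c k piv.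
  exact.
elim=> [_|c IH ltcp].
  by exists 1%:M, 0%N, (fun=> 0%N); split; [exact: unitmx1 | split].
have [Q [k [piv [uQ PF]]]] := IH (ltnW ltcp).
have [Q' [k' [piv' [uQ' PF']]]] := pivot_formS ltcp PF.
by exists (Q' *m Q), k', piv'; rewrite unitmx_mul uQ' uQ -mulmxA.
Qed.

Lemma pivot_form_is_pivot R k piv (i : 'I_m) (j : 'I_p) :
  pivot_form R p k piv -> is_pivot R i j -> (i < k)%N /\ j = piv i :> nat.
Proof.
move=> PF [nz before_j].
have lt_i_k : (i < k)%N.
  by rewrite ltnNge; apply: contra nz => le_k_i; rewrite (pivot_below PF).
split => //; case: (ltngtP j (piv i)) => // [ltj|gtj].
  by rewrite (pivot_before PF) ?eqxx in nz.
have := pivot_one PF (j := Ordinal (pivot_lt PF lt_i_k)) lt_i_k erefl.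
by rewrite before_j // => /eqP; rewrite eq_sym oner_eq0.
Qed.

Lemma pivot_form_rref R k piv : pivot_form R p k piv -> is_rref R.
Proof.
move=> PF; split; [|split].
- move=> i1 i2 le_i12 zero_i1 j; apply: (pivot_below PF) => //.
  apply: (leq_trans _ le_i12); rewrite leqNgt; apply/negP => lt_i1_k.
  have := pivot_one PF (j := Ordinal (pivot_lt PF lt_i1_k)) lt_i1_k erefl.
  by rewrite zero_i1 => /eqP; rewrite eq_sym oner_eq0.
- move=> i j /(pivot_form_is_pivot PF) [lt_i_k j_piv].
  by split; [exact: (pivot_one PF) | move=> i'; exact: (pivot_col PF)].
- move=> i1 i2 j1 j2 lt_i12 /(pivot_form_is_pivot PF) [_ ->].
  by move=> /(pivot_form_is_pivot PF) [lt_i2_k ->]; exact: (pivot_incr PF).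
Qed.

End PivotForm.

Lemma incr_onto_interval k e r (piv : nat -> nat) :
  (forall i i', (i < i')%N -> (i' < k)%N -> (piv i < piv i')%N) ->
  (forall i, (i < k)%N -> (piv i < e + r)%N) ->
  (forall t, (t < r)%N -> exists2 i, (i < k)%N & piv i = (e + t)%N) ->
  exists p1, k = (p1 + r)%N /\ forall t, (t < r)%N -> piv (p1 + t)%N = (e + t)%N.
Proof.
move=> incr bound onto.
have mono i i' : (i <= i')%N -> (i' < k)%N -> (piv i <= piv i')%N.
  by rewrite leq_eqVlt => /orP [/eqP -> //|lt_ii' lt_i'_k]; exact/ltnW/incr.
have [r0|r_gt0] := posnP r; first by exists k; rewrite r0 addn0.
have [i0 lt_i0_k piv_i0] := onto 0%N r_gt0.
have run t : (t < r)%N -> (i0 + t < k)%N /\ piv (i0 + t)%N = (e + t)%N.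
  elim: t => [|t IH] lt_t_r; first by rewrite !addn0 piv_i0 addn0.
  have [lt_t_k piv_t] := IH (ltnW lt_t_r).
  have [i lt_i_k piv_i] := onto t.+1 lt_t_r.
  have lt_t_i : (i0 + t < i)%N.
    rewrite ltnNge; apply/negP => le_i_t.
    by have := mono _ _ le_i_t lt_t_k; rewrite piv_i piv_t; lia.
  have lt_t1_k : (i0 + t.+1 < k)%N by rewrite addnS; exact: leq_ltn_trans lt_t_i lt_i_k.
  split => //; apply/eqP; rewrite eqn_leq; apply/andP; split.
    by rewrite -piv_i; apply: mono => //; rewrite addnS.
  by rewrite !addnS -piv_t; apply: incr; rewrite // -addnS.
exists i0; split; last by move=> t /run [].
have lt_pred_r : (r.-1 < r)%N by rewrite prednK.
have [lt_last_k piv_last] := run _ lt_pred_r.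
have [lt_r_k|] := ltnP (i0 + r) k; last by lia.
have lt_last_r : (i0 + r.-1 < i0 + r)%N by lia.
have := incr _ _ lt_last_r lt_r_k; have := bound _ lt_r_k; lia.
Qed.

Section TemplateShape.
Variables (K : fieldType) (m p : nat).
Implicit Types (R M : 'M[K]_(m, p)) (e r : nat).

Definition rowspace_zero_on_prefix M (c : nat) : Prop :=
  forall u : 'rV[K]_p, (u <= M)%MS -> (forall j : 'I_p, (j < c)%N -> u 0 j = 0) -> u = 0.

Definition rowspace_unit_block M e r : Prop :=
  forall t, (t < r)%N -> exists2 u : 'rV[K]_p, (u <= M)%MS &
    (forall j : 'I_p, (j < e)%N -> u 0 j = 0) /\
    (forall j : 'I_p, (e <= j < e + r)%N -> u 0 j = ((j - e)%N == t)%:R).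

Section Pivots.
Variables (R : 'M[K]_(m, p)) (k : nat) (piv : nat -> nat).
Hypothesis PF : pivot_form R p k piv.

Lemma pivot_lt_prefix c : rowspace_zero_on_prefix R c -> forall i, (i < k)%N -> (piv i < c)%N.
Proof.
move=> zero_on i lt_i_k; rewrite ltnNge; apply/negP => le_c_piv.
have im : (i < m)%N := leq_trans lt_i_k (pivot_rows PF).
have row0 : row (Ordinal im) R = 0.
  apply: zero_on (row_sub _ _) _ => j lt_j_c; rewrite mxE.
  exact: (pivot_before PF (i := Ordinal im) lt_i_k (leq_trans lt_j_c le_c_piv)).
have /rowP/(_ (Ordinal (pivot_lt PF lt_i_k))) := row0.
by rewrite !mxE (pivot_one PF (i := Ordinal im)) //; apply/eqP/oner_neq0.
Qed.

Lemma mulmx_at_pivot (y : 'rV[K]_m) (l : 'I_m) (j : 'I_p) :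
  (l < k)%N -> j = piv l :> nat -> (y *m R) 0 j = y 0 l.
Proof.
move=> lt_l_k j_piv; rewrite mxE (bigD1 l) //= (pivot_one PF) // mulr1.
by rewrite big1 ?addr0 // => i ne; rewrite (pivot_col PF lt_l_k j_piv) ?mulr0.
Qed.

Lemma pivot_onto_block e r : (e + r <= p)%N -> rowspace_unit_block R e r ->
  forall t, (t < r)%N -> exists2 i, (i < k)%N & piv i = (e + t)%N.
Proof.
move=> le_erp unit_block t lt_t_r.
have [u /submxP [y ->] [u_pre u_blk]] := unit_block t lt_t_r.
have [/exists_inP [l lt_l_k /eqP piv_l]|no_pivot] :=
  boolP [exists (l : 'I_m | (l < k)%N), piv l == (e + t)%N]; first by exists l.
have lt_et_p : (e + t < p)%N by lia.
have := u_blk (Ordinal lt_et_p); rewrite /= leq_addr addKn ltn_add2l lt_t_r eqxx => /(_ isT).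
rewrite mxE big1 => [/eqP|l _]; first by rewrite eq_sym oner_eq0.
have [lt_l_k|le_k_l] := ltnP l k; last by rewrite (pivot_below PF) ?mulr0.
case: (ltngtP (piv l) (e + t)) => [lt_piv|gt_piv|eq_piv].
- rewrite -(mulmx_at_pivot y lt_l_k (j := Ordinal (pivot_lt PF lt_l_k))) //.
  have [lt_piv_e|le_e_piv] := ltnP (piv l) e; first by rewrite u_pre ?mul0r.
  rewrite u_blk /=; last by rewrite le_e_piv; lia.
  have -> : (piv l - e == t)%N = false by apply/eqP; lia.
  by rewrite mul0r.
- by rewrite (pivot_before PF lt_l_k) ?mulr0.
- by case/exists_inP: no_pivot; exists l; rewrite ?eq_piv.
Qed.

Lemma pivot_form_template_shape e r : (e + r <= p)%N ->
  rowspace_zero_on_prefix R (e + r) -> rowspace_unit_block R e r -> template_shape e r R.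
Proof.
move=> le_erp zero_on unit_block.
have [p1 [k_eq piv_blk]] := incr_onto_interval (pivot_incr PF)
  (pivot_lt_prefix zero_on) (pivot_onto_block le_erp unit_block).
have km := pivot_rows PF.
have off_pivot (i : 'I_m) (j : 'I_p) :
    (e <= j < e + r)%N -> i != (p1 + (j - e))%N :> nat -> R i j = 0.
  move=> /andP [le_e_j lt_j_er] ne.
  have lt_m : (p1 + (j - e) < m)%N by lia.
  apply: (pivot_col PF (i := Ordinal lt_m)) => /=; first by lia.
    by rewrite piv_blk; lia.
  by apply: contra ne => /eqP ->.
exists p1; split; first by rewrite -k_eq.
move=> i j; split; [|split].
- by move=> lt_i_p1 j_blk; apply: off_pivot => //; lia.
- move=> /andP [le_p1_i lt_i] lt_j.
  have lt_i_k : (i < k)%N by lia.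
  have piv_i : piv i = (e + (i - p1))%N by rewrite -piv_blk ?subnKC //; lia.
  have -> : ((e <= j) && (j - e == i - p1))%N = (j == piv i :> nat).
    by rewrite piv_i; apply/andP/eqP => [[? /eqP]|]; lia.
  case: (ltngtP j (piv i)) => [lt_j_piv|gt_j_piv|j_piv].
  + exact: (pivot_before PF lt_i_k lt_j_piv).
  + by apply: off_pivot; lia.
  + exact: (pivot_one PF lt_i_k j_piv).
- by move=> le_i; apply: (pivot_below PF) => //; lia.
Qed.

End Pivots.

Lemma template_shape_exists (M : 'M[K]_(m, p)) e r : (e + r <= p)%N ->
  rowspace_zero_on_prefix M (e + r) -> rowspace_unit_block M e r ->
  exists R, rref_of R M /\ template_shape e r R.
Proof.
move=> le_erp zero_on unit_block.
have [Q [k [piv [uQ PF]]]] := pivot_form_exists M.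
have eqQM : (Q *m M :=: M)%MS by apply: eqmxMfull; rewrite row_full_unit.
exists (Q *m M); split; first by split; [exact: pivot_form_rref PF | exists Q].
apply: (pivot_form_template_shape PF le_erp).
- by move=> u; rewrite eqQM; apply: zero_on.
- by move=> t /unit_block [u]; rewrite -eqQM; exists u.
Qed.
End TemplateShape.

(** * Macaulay matrices and quotient bases *)

Section Span.
Variables (K : fieldType) (n s : nat) (F : 'I_s -> {mpoly K[n]}).
Local Notation poly := {mpoly K[n]}.
Local Notation mon := 'X_{1..n}.
Implicit Types (p q : poly) (Ps : seq poly).

Lemma in_ideal0 : in_ideal F 0.
Proof. by exists (fun=> 0); rewrite big1 // => k _; rewrite mul0r. Qed.

Lemma in_idealD p q : in_ideal F p -> in_ideal F q -> in_ideal F (p + q).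
Proof.
move=> [hp ->] [hq ->]; exists (fun k => hp k + hq k).
by rewrite -big_split; apply: eq_bigr => k _; rewrite mulrDl.
Qed.

Lemma in_idealZ c p : in_ideal F p -> in_ideal F (c *: p).
Proof.
move=> [h ->]; exists (fun k => c *: h k).
by rewrite scaler_sumr; apply: eq_bigr => k _; rewrite scalerAl.
Qed.

Lemma in_ideal_mulX (mo : mon) k : in_ideal F ('X_[mo] * F k).
Proof.
exists (fun k' => (k' == k)%:R * 'X_[mo]).
rewrite (bigD1 k) //= eqxx mul1r big1 ?addr0 // => k' /negPf ->.
by rewrite !mul0r.
Qed.

Definition lincomb Ps (x : 'rV[K]_(size Ps)) : poly :=
  \sum_(l < size Ps) x 0 l *: Ps`_l.

Definition in_span Ps q := exists x, q = @lincomb Ps x.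

Lemma mcoeff_lincomb Ps x (mo : mon) :
  (@lincomb Ps x)@_mo = \sum_(l < size Ps) x 0 l * Ps`_l@_mo.
Proof. by rewrite (raddf_sum (mcoeff mo)); apply: eq_bigr => l _; exact: mcoeffZ. Qed.

Lemma macaulay_mulE Ps (cols : seq mon) x (j : 'I_(size cols)) :
  (x *m macaulay Ps cols) 0 j = (@lincomb Ps x)@_(nth 0%MM cols j).
Proof. by rewrite mxE mcoeff_lincomb; apply: eq_bigr => l _; rewrite mxE. Qed.

Lemma sub_macaulayP Ps (cols : seq mon) (u : 'rV[K]_(size cols)) :
  (u <= macaulay Ps cols)%MS ->
  exists x, forall j, u 0 j = (@lincomb Ps x)@_(nth 0%MM cols j).
Proof. by case/submxP => x ->; exists x => j; exact: macaulay_mulE. Qed.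

Lemma lincomb_in_ideal Ps x : {in Ps, forall g, in_ideal F g} -> in_ideal F (@lincomb Ps x).
Proof.
move=> Ps_ideal; apply: (big_ind (in_ideal F)) => [|p q|l _].
- exact: in_ideal0.
- exact: in_idealD.
- by apply/in_idealZ/Ps_ideal/mem_nth.
Qed.

Lemma msupp_lincomb Ps x (mo : mon) :
  (@lincomb Ps x)@_mo != 0 -> mo \in monomials_of Ps.
Proof.
apply: contraNT => notin; rewrite mcoeff_lincomb big1 // => l _.
suff -> : Ps`_l@_mo = 0 by rewrite mulr0.
apply/eqP; rewrite -[_ == 0]negbK -mcoeff_msupp; apply: contra notin => mo_l.
by rewrite mem_undup; apply/flatten_mapP; exists Ps`_l; rewrite ?mem_nth.
Qed.

Lemma in_span0 Ps : in_span Ps 0.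
Proof. by exists 0; rewrite /lincomb big1 // => l _; rewrite mxE scale0r. Qed.

Lemma in_spanD Ps p q : in_span Ps p -> in_span Ps q -> in_span Ps (p + q).
Proof.
move=> [x ->] [y ->]; exists (x + y).
by rewrite /lincomb -big_split; apply: eq_bigr => l _; rewrite mxE scalerDl.
Qed.

Lemma in_spanZ Ps c q : in_span Ps q -> in_span Ps (c *: q).
Proof.
move=> [x ->]; exists (c *: x).
by rewrite /lincomb scaler_sumr; apply: eq_bigr => l _; rewrite mxE scalerA.
Qed.

Lemma in_span_mem Ps q : q \in Ps -> in_span Ps q.
Proof.
move=> q_in; have lt_q : (index q Ps < size Ps)%N by rewrite index_mem.
exists (delta_mx 0 (Ordinal lt_q)).
rewrite /lincomb (bigD1 (Ordinal lt_q)) //= mxE !eqxx scale1r nth_index //.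
by rewrite big1 ?addr0 // => l /negPf ne; rewrite mxE ne scale0r.
Qed.

Lemma in_span_sum Ps (I : eqType) (r : seq I) (G : I -> poly) :
  (forall i, i \in r -> in_span Ps (G i)) -> in_span Ps (\sum_(i <- r) G i).
Proof.
move=> G_span; rewrite big_seq; apply: (big_ind (in_span Ps)) => //.
- exact: in_span0.
- exact: in_spanD.
Qed.

Lemma shifts_in_ideal A : {in shifts F A, forall g, in_ideal F g}.
Proof.
move=> g; rewrite mem_undup => /flatten_mapP [k _ /mapP [mo _ ->]].
exact: in_ideal_mulX.
Qed.

Lemma in_span_shifts A (h : 'I_s -> poly) :
  (forall k, {subset msupp (h k) <= A k}) ->
  in_span (shifts F A) (\sum_(k < s) h k * F k).
Proof.
move=> supp_h; apply: in_span_sum => k _.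
rewrite (mpolyE (h k)) big_distrl /=; apply: in_span_sum => mo mo_h.
rewrite -scalerAl; apply/in_spanZ/in_span_mem.
rewrite mem_undup; apply/flatten_mapP; exists k; first by rewrite mem_enum.
exact/map_f/supp_h.
Qed.

End Span.

Section QuotientBasis.
Variables (K : fieldType) (n s d : nat) (F : 'I_s -> {mpoly K[n]}) (B : 'I_d -> 'X_{1..n}).
Local Notation poly := {mpoly K[n]}.
Local Notation mon := 'X_{1..n}.

Lemma mcoeff_sum_basis (c : 'I_d -> K) (mo : mon) :
  (\sum_(l < d) c l *: 'X_[B l])@_mo = \sum_(l < d) c l * (B l == mo)%:R.
Proof.
rewrite (raddf_sum (mcoeff mo)); apply: eq_bigr => l _.
by have := mcoeffZ (c l) 'X_[B l] mo; rewrite mcoeffX.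
Qed.

Lemma mcoeff_sum_basis_out (c : 'I_d -> K) (mo : mon) : mo \notin basis_seq B ->
  (\sum_(l < d) c l *: 'X_[B l])@_mo = 0.
Proof.
move=> notin; rewrite mcoeff_sum_basis big1 // => l _.
suff /negPf -> : B l != mo by rewrite mulr0.
by apply: contraNneq notin => <-; apply: map_f; rewrite mem_enum.
Qed.

Lemma mcoeff_mul_basis_out (a : mon) (T : 'M[K]_d) i mo : mo \notin basis_seq B ->
  ('X_[a] * 'X_[B i] - \sum_(j < d) T i j *: 'X_[B j])@_mo = ((a + B i)%MM == mo)%:R.
Proof. by move=> notin; rewrite mcoeffB -mpolyXD mcoeffX mcoeff_sum_basis_out ?subr0. Qed.

Hypothesis basisB : quotient_basis F B.

Lemma quotient_basis_inj : injective B.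
Proof.
case: basisB => _ indep i j Bij; apply/eqP; apply: contraT => ne.
have sum_delta (k : 'I_d) : \sum_(l < d) (l == k)%:R *: 'X_[B l] = 'X_[B k] :> poly.
  rewrite (bigD1 k) //= eqxx scale1r big1 ?addr0 // => l /negPf ->.
  by rewrite scale0r.
pose c l : K := (l == i)%:R - (l == j)%:R.
have : in_ideal F (\sum_(l < d) c l *: 'X_[B l]).
  under eq_bigr do rewrite scalerBl.
  by rewrite sumrB !sum_delta Bij subrr; exact: in_ideal0.
move/indep/(_ i); rewrite /c eqxx (negPf ne) subr0 => /eqP.
by rewrite oner_eq0.
Qed.

Lemma quotient_basis_ideal_eq0 (q : poly) :
  in_ideal F q -> {subset msupp q <= basis_seq B} -> q = 0.
Proof.
move=> q_ideal q_supp.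
have qE : q = \sum_(l < d) q@_(B l) *: 'X_[B l].
  apply/mpolyP => mo; have [/mapP [i _ ->]|notin] := boolP (mo \in basis_seq B).
    rewrite mcoeff_sum_basis (bigD1 i) //= eqxx mulr1 big1 ?addr0 // => l ne.
    by rewrite (inj_eq quotient_basis_inj) (negPf ne) mulr0.
  rewrite mcoeff_sum_basis_out //; apply/eqP; rewrite -[_ == 0]negbK -mcoeff_msupp.
  by apply: contra notin; apply: q_supp.
case: basisB => _ /(_ (fun l => q@_(B l))); rewrite -qE => /(_ q_ideal) coef0.
by rewrite qE big1 // => l _; rewrite coef0 scale0r.
Qed.

End QuotientBasis.

Section Columns.
Variables (K : fieldType) (n d : nat) (P : seq {mpoly K[n]}).
Variables (B : 'I_d -> 'X_{1..n}) (a : 'X_{1..n}).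
Local Notation E := (excessive P B a).
Local Notation Rd := (reducible B a).
Local Notation cols := (columns P B a).

Lemma mem_reducible mo :
  mo \in Rd -> exists i, mo = (a + B i)%MM /\ mo \notin basis_seq B.
Proof.
rewrite mem_undup mem_filter => /andP [notin /mapP [b /mapP [i _ b_i] mo_b]].
by exists i; rewrite mo_b b_i in notin *.
Qed.

Hypothesis Rd_sub : {subset Rd <= monomials_of P}.

Lemma columnsE : cols = E ++ Rd ++ basic_present P B.
Proof. by rewrite /columns (all_filterP (introT allP Rd_sub)). Qed.

Lemma nth_columns_excessive j : (j < size E)%N -> nth 0%MM cols j = nth 0%MM E j.
Proof. by move=> lt_j; rewrite columnsE nth_cat lt_j. Qed.

Lemma nth_columns_reducible t :
  (t < size Rd)%N -> nth 0%MM cols (size E + t) = nth 0%MM Rd t.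
Proof. by move=> lt_t; rewrite columnsE nth_cat ltnNge leq_addr addKn /= nth_cat lt_t. Qed.

Lemma size_columns_prefix : (size E + size Rd <= size cols)%N.
Proof. by rewrite columnsE !size_cat addnA leq_addr. Qed.

Lemma index_columns mo : mo \in monomials_of P -> mo \notin basis_seq B ->
  exists2 j : 'I_(size cols), (j < size E + size Rd)%N & nth 0%MM cols j = mo.
Proof.
move=> mo_P notin; have mo_ER : mo \in E ++ Rd.
  by rewrite mem_cat mem_filter mo_P notin andbT orbC; case: (mo \in Rd).
have mo_cols : mo \in cols by rewrite columnsE catA mem_cat mo_ER.
have lt_idx : (index mo cols < size cols)%N by rewrite index_mem.
exists (Ordinal lt_idx); last exact: nth_index.
by rewrite /= columnsE catA index_cat mo_ER -size_cat index_mem.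
Qed.

End Columns.

Section Template.
Variables (K : fieldType) (n s d : nat) (F : 'I_s -> {mpoly K[n]}).
Variables (B : 'I_d -> 'X_{1..n}) (a : 'X_{1..n}) (T : 'M[K]_d) (P : seq {mpoly K[n]}).
Hypothesis basisB : quotient_basis F B.
Hypothesis P_ideal : {in P, forall g, in_ideal F g}.
Hypothesis V_span :
  forall i, in_span P ('X_[a] * 'X_[B i] - \sum_(j < d) T i j *: 'X_[B j]).
Local Notation E := (excessive P B a).
Local Notation Rd := (reducible B a).
Local Notation cols := (columns P B a).

Lemma reducible_sub_monomials : {subset Rd <= monomials_of P}.
Proof.
move=> mo /mem_reducible [i [-> notin]]; have [x V_x] := V_span i.
apply: (msupp_lincomb (x := x)); rewrite -V_x mcoeff_mul_basis_out ?eqxx //.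
exact: oner_neq0.
Qed.

Let Rd_sub := reducible_sub_monomials.

Lemma macaulay_zero_on_prefix :
  rowspace_zero_on_prefix (macaulay P cols) (size E + size Rd).
Proof.
move=> u /sub_macaulayP [x u_x] u_pre.
suff x0 : lincomb x = 0 by apply/rowP => j; rewrite u_x x0 mcoeff0 mxE.
apply: (quotient_basis_ideal_eq0 basisB (lincomb_in_ideal x P_ideal)) => mo.
rewrite mcoeff_msupp => nz; apply: contraT => notin.
have [j lt_j cols_j] := index_columns Rd_sub (msupp_lincomb nz) notin.
by move: nz; rewrite -cols_j -u_x u_pre ?eqxx.
Qed.

Lemma macaulay_unit_block : rowspace_unit_block (macaulay P cols) (size E) (size Rd).
Proof.
move=> t lt_t.
have [i [Rd_t notin]] := mem_reducible (mem_nth 0%MM lt_t).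
have [x V_x] := V_span i.
exists (x *m macaulay P cols); first by apply/submxP; exists x.
split => j; rewrite macaulay_mulE -V_x.
- move=> lt_j; rewrite (nth_columns_excessive Rd_sub) //.
  have := mem_nth 0%MM lt_j; rewrite mem_filter => /andP [/andP [notRd notB] _].
  rewrite mcoeff_mul_basis_out // -Rd_t.
  suff /negPf -> : nth 0%MM Rd t != nth 0%MM E j by [].
  by apply: contraNneq notRd => <-; exact: mem_nth.
- move=> /andP [le_j lt_j]; have lt_jt : (j - size E < size Rd)%N by lia.
  rewrite -(subnKC le_j) (nth_columns_reducible Rd_sub) //.
  rewrite mcoeff_mul_basis_out; last first.
    by have [? []] := mem_reducible (mem_nth 0%MM lt_jt).
  by rewrite -Rd_t nth_uniq ?undup_uniq // addKn eq_sym.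
Qed.

Lemma macaulay_elimination_template :
  {subset Rd <= monomials_of P} /\
  exists R, rref_of R (macaulay P cols) /\ template_shape (size E) (size Rd) R.
Proof.
split; first exact: Rd_sub.
apply: template_shape_exists (size_columns_prefix Rd_sub) _ _.
- exact: macaulay_zero_on_prefix.
- exact: macaulay_unit_block.
Qed.

End Template.

Lemma elimination_template_of_span (K : fieldType) (n s d : nat)
    (F : 'I_s -> {mpoly K[n]}) (A : 'I_s -> seq 'X_{1..n})
    (B : 'I_d -> 'X_{1..n}) (a : 'X_{1..n}) (T : 'M[K]_d) :
  quotient_basis F B ->
  (forall i, in_span (shifts F A) ('X_[a] * 'X_[B i] - \sum_(j < d) T i j *: 'X_[B j])) ->
  elimination_template F A B a.
Proof.
move=> basisB V_span.
exact: macaulay_elimination_template basisB (@shifts_in_ideal _ _ _ F A) V_span.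
Qed.

Lemma msupp_sub_col_monomials (K : fieldType) (n s d : nat)
    (H : 'I_d -> 'I_s -> {mpoly K[n]}) i k :
  {subset msupp (H i k) <= col_monomials H k}.
Proof.
move=> mo mo_H; rewrite mem_undup; apply/flatten_mapP.
by exists i; rewrite ?mem_enum.
Qed.

Theorem mainTheorem2 (K : fieldType) (n s d : nat)
    (F : 'I_s -> {mpoly K[n]}) (B : 'I_d -> 'X_{1..n}) (a : 'X_{1..n})
    (T : 'M[K]_d) (H : 'I_d -> 'I_s -> {mpoly K[n]}) :
  quotient_basis F B ->
  a != mnm0 ->
  (forall i : 'I_d,
     in_ideal F ('X_[a] * 'X_[B i] - \sum_(j < d) T i j *: 'X_[B j])) ->
  (forall i : 'I_d,
     'X_[a] * 'X_[B i] - \sum_(j < d) T i j *: 'X_[B j]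
       = \sum_(k < s) H i k * F k) ->
  elimination_template F (col_monomials H) B a.
Proof.
move=> basisB _ _ V_H; apply: (elimination_template_of_span (T := T) basisB) => i.
by rewrite V_H; apply: in_span_shifts => k; exact: msupp_sub_col_monomials.
Qed.
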